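(* Let $\mathbf{B}$ be the interaction matrix of an antiferromagnetic $q$-spin system, and let $\mathbf{z}_1,\mathbf{z}_2\in\mathbb{R}^q_{\geq0}$ with $\|\mathbf{z}_1\|_1=\|\mathbf{z}_2\|_1=1$. Then \[(\mathbf{z}_1^{\intercal}\mathbf{B}\mathbf{z}_1)(\mathbf{z}_2^{\intercal}\mathbf{B}\mathbf{z}_2)\leq(\mathbf{z}_1^{\intercal}\mathbf{B}\mathbf{z}_2)^2,\] with equality if and only if $\mathbf{z}_1=\mathbf{z}_2$.
   Context: $\mathbf{B}$ is a symmetric irreducible $q\times q$ matrix with nonnegative entries. It is antiferromagnetic if, apart from its Perron–Frobenius eigenvalue (which is positive and simple), all its eigenvalues are negative; in particular $\mathbf{B}$ is invertible. *)

From HB Require Import structures.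
From mathcomp Require Import all_boot all_order all_algebra.
From mathcomp Require Import reals.
Set Implicit Arguments. Unset Strict Implicit. Unset Printing Implicit Defensive.
Import Order.TTheory GRing.Theory Num.Theory.
Local Open Scope ring_scope.

Definition irreducible_mx (R : realType) (q : nat) (B : 'M[R]_q) : Prop :=
  forall i j : 'I_q, connect (fun a b => 0 < B a b) i j.

Definition antiferromagnetic (R : realType) (q : nat) (B : 'M[R]_q) : Prop :=
  [/\ B^T = B,
      (forall i j, 0 <= B i j),
      irreducible_mx B &
      exists2 lam : R, 0 < lam /\ eigenvalue B lam &
        mup lam (char_poly B) = 1%N /\
        (forall mu : R, eigenvalue B mu -> mu != lam -> mu < 0)].

Definition bform (R : realType) (q : nat) (B : 'M[R]_q) (z1 z2 : 'cV[R]_q) : R :=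
  (z1^T *m B *m z2) 0 0.

Definition prob_vec (R : realType) (q : nat) (z : 'cV[R]_q) : Prop :=
  (forall i, 0 <= z i 0) /\ \sum_i `|z i 0| = 1.

(* Let u be a left eigenvector of B for its simple eigenvalue lam.  All other
   eigenvalues being negative, the spectral theorem makes x |-> x^T B x
   negative definite on the hyperplane u x = 0.  A nonnegative nonzero z has
   z^T B z >= 0, so a_i := u z_i is nonzero and w := a_2 z_1 - a_1 z_2 lies on the
   hyperplane.  Then w^T B w <= 0 says that the binary form
   (s, t) |-> (s z_1 + t z_2)^T B (s z_1 + t z_2), with nonnegative diagonal
   coefficients, is nonpositive at (a_2, -a_1); hence its discriminant is
   nonnegative, which is the inequality.  Equality forces w^T B w = 0, so w = 0,
   and comparing entry sums gives z_1 = z_2. *)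

From HB Require Import structures.
From mathcomp Require Import all_boot all_order all_algebra.
From mathcomp Require Import reals complex ring lra.
Set Implicit Arguments. Unset Strict Implicit. Unset Printing Implicit Defensive.
Import Order.TTheory GRing.Theory Num.Theory.
Local Open Scope ring_scope.
Local Open Scope sesquilinear_scope.

Lemma char_poly_similar (F : fieldType) n (P A : 'M[F]_n) : P \in unitmx ->
  char_poly (invmx P *m A *m P) = char_poly A.
Proof.
move=> Pu; rewrite /char_poly.
set Pp := map_mx polyC P; set Pi := map_mx polyC (invmx P).
have PiPp : Pi *m Pp = 1%:M by rewrite -map_mxM mulVmx // map_mx1.
have -> : char_poly_mx (invmx P *m A *m P) = Pi *m char_poly_mx A *m Pp.
  rewrite /char_poly_mx mulmxBr mulmxBl !map_mxM -/Pp -/Pi.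
  by rewrite mul_mx_scalar -scalemxAl PiPp scalemx1.
rewrite !det_mulmx mulrC mulrA -det_mulmx.
have -> : Pp *m Pi = 1%:M by rewrite -map_mxM mulmxV // map_mx1.
by rewrite det1 mul1r.
Qed.

Lemma mup_map (F K : fieldType) (f : {rmorphism F -> K}) a (p : {poly F}) :
  p != 0 -> mup (f a) (map_poly f p) = mup a p.
Proof.
move=> p0; have fp0 : map_poly f p != 0 by rewrite map_poly_eq0.
have dvd_map n : (('X - (f a)%:P) ^+ n %| map_poly f p) = (('X - a%:P) ^+ n %| p).
  by rewrite -map_polyXsubC -rmorphXn dvdp_map.
apply/eqP; rewrite eqn_leq; apply/andP; split.
  by rewrite mup_geq // -dvd_map -mup_geq.
by rewrite mup_geq // dvd_map -mup_geq.
Qed.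

Section NormalSpectral.
Variables (C : numClosedFieldType) (n : nat) (M : 'M[C]_n).
Hypothesis normalM : M \is normalmx.
Local Notation P := (spectralmx M).
Local Notation D := (spectral_diag M).

Let M_spectral : M = invmx P *m diag_mx D *m P := orthomx_spectralP normalM.

Lemma char_poly_spectral : char_poly M = \prod_(y <- codom (D 0)) ('X - y%:P).
Proof.
rewrite [in LHS]M_spectral char_poly_similar ?spectral_unit //.
rewrite char_poly_trig ?diag_mx_is_trig // codomE big_map big_enum /=.
by apply: eq_bigr => i _; rewrite mxE eqxx.
Qed.

Lemma mup_char_poly_spectral a : mup a (char_poly M) = #|[pred i | D 0 i == a]|.
Proof.
rewrite char_poly_spectral mu_prod_XsubC codomE count_map.
by rewrite cardE -size_filter /enum_mem filter_predT.
Qed.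

Lemma eigenvalue_spectral_diagP a : reflect (exists i, D 0 i = a) (eigenvalue M a).
Proof.
rewrite eigenvalue_root_char char_poly_spectral root_prod_XsubC.
by apply: (iffP codomP) => -[i Di]; exists i.
Qed.

Lemma form_spectral (x : 'cV_n) :
  (x ^t* *m M *m x) 0 0 = \sum_j D 0 j * `|(P *m x) j 0| ^+ 2.
Proof.
rewrite [in LHS]M_spectral invmx_unitary ?spectral_unitarymx // !mulmxA.
rewrite -map_mxM -trmx_mul -mulmxA; set y := P *m x.
rewrite mul_mx_diag mxE; apply: eq_bigr => j _.
by rewrite !mxE normCK mulrAC mulrC [_^* * _]mulrC.
Qed.

Lemma eigenvector_spectral_coord (u : 'rV_n) a i :
  u *m M = a *: u -> D 0 i != a -> (u *m invmx P) 0 i = 0.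
Proof.
move=> uM; set s := u *m invmx P; apply: contraNeq => si; apply/eqP.
have : s *m diag_mx D = a *: s.
  by rewrite -mulmxA -[_ *m diag_mx D](mulmxK (spectral_unit M)) -M_spectral
    mulmxA uM scalemxAl.
rewrite mul_mx_diag => /rowP/(_ i); rewrite [LHS]mxE [RHS]mxE => sD.
by apply: (mulfI si); rewrite sD mulrC.
Qed.

Lemma normalmx_form_lt0 a (u : 'rV_n) (x : 'cV_n) :
  (mup a (char_poly M) <= 1)%N ->
  (forall mu, eigenvalue M mu -> mu != a -> mu < 0) ->
  u != 0 -> u *m M = a *: u -> (u *m x) 0 0 = 0 -> x != 0 ->
  (x ^t* *m M *m x) 0 0 < 0.
Proof.
(* With y := P x the form is \sum_j D_j |y_j|^2, and u only has coordinates at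
   the unique k with D_k = a, so u x = 0 forces y_k = 0. *)
move=> simple_a neg_other u0 uM ux0 x0.
set s := u *m invmx P; set y := P *m x.
have Dneq j k : D 0 k = a -> j != k -> D 0 j != a.
  move=> Dk; apply: contraNneq => Dj.
  move: simple_a; rewrite mup_char_poly_spectral => /card_le1_eqP le1.
  by apply/eqP; apply: le1; rewrite inE ?Dj ?Dk.
have [k sk] : exists k, s 0 k != 0.
  apply/rV0Pn; apply: contraNneq u0 => s0.
  by rewrite -[u](mulmxKV (spectral_unit M)) -/s s0 mul0mx.
have Dk : D 0 k = a.
  by apply/eqP; apply: contraNT sk => /(eigenvector_spectral_coord uM) ->.
have yk : y k 0 = 0.
  have : (s *m y) 0 0 = 0 by rewrite /s /y mulmxA mulmxKV ?spectral_unit.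
  rewrite mxE (bigD1 k) //= big1 ?addr0 => [/eqP|j jk]; last first.
    by rewrite (eigenvector_spectral_coord uM (Dneq j k Dk jk)) mul0r.
  by rewrite mulf_eq0 (negPf sk) => /eqP.
have [j yj] : exists j, y j 0 != 0.
  apply/cV0Pn; apply: contraNneq x0 => y0.
  by rewrite -[x](mulKmx (spectral_unit M)) -/y y0 mulmx0.
have Dlt i : i != k -> D 0 i < 0.
  move=> ik; apply: neg_other (Dneq i k Dk ik).
  by apply/eigenvalue_spectral_diagP; exists i.
have jk : j != k by move: yj; apply: contraNneq => ->; rewrite yk.
rewrite form_spectral (bigD1 j) //= -[ltRHS]addr0; apply: ltr_leD.
  by rewrite nmulr_rlt0 ?Dlt // exprn_gt0 // normr_gt0.
apply: sumr_le0 => i _; have [->|ik] := eqVneq i k.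
  by rewrite yk normr0 expr0n mulr0.
by rewrite nmulr_rle0 ?Dlt // exprn_ge0.
Qed.

End NormalSpectral.

Lemma hermmx_eigenvalue_real (C : numClosedFieldType) n (M : 'M[C]_n) mu :
  M \is hermsymmx -> eigenvalue M mu -> mu \is Num.real.
Proof.
move=> hermM /(eigenvalue_spectral_diagP (hermitian_normalmx hermM)) [i <-].
by have /mxOverP := hermitian_spectral_diag_real hermM; apply.
Qed.

Section RealSymmetric.
Variable R : realType.
Local Notation toC := (real_complex R).

Lemma symmetric_bform_lt0 n (B : 'M[R]_n) lam (u : 'rV_n) (x : 'cV_n) :
  B^T = B -> (mup lam (char_poly B) <= 1)%N ->
  (forall mu, eigenvalue B mu -> mu != lam -> mu < 0) ->
  u != 0 -> u *m B = lam *: u -> (u *m x) 0 0 = 0 -> x != 0 ->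
  bform B x x < 0.
Proof.
move=> symB simple_lam neg_other u0 uB ux0 x0.
(* The spectral theorem needs an algebraically closed field: view B over R[i]. *)
pose Bc := map_mx toC B.
have toC_real a : toC a \is Num.real by rewrite complex_real.
have hermBc : Bc \is hermsymmx.
  apply: realsym_hermsym; last by apply/mxOverP => i j; rewrite mxE.
  by rewrite qualifE /Bc expr0 scale1r map_mx_id // map_trmx symB.
have form_toC :
    ((map_mx toC x) ^t* *m Bc *m map_mx toC x) 0 0 = toC (bform B x x).
  have -> : (map_mx toC x) ^t* = (map_mx toC x)^T.
    by apply/matrixP => i j; rewrite !mxE conj_Creal.
  by rewrite map_trmx /Bc -!map_mxM mxE.
have simple_Bc : (mup (toC lam) (char_poly Bc) <= 1)%N.
  by rewrite -map_char_poly mup_map ?monic_neq0 ?char_poly_monic.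
have neg_Bc mu : eigenvalue Bc mu -> mu != toC lam -> mu < 0.
  move=> eig_mu.
  have /complex_realP [k mu_k] := hermmx_eigenvalue_real hermBc eig_mu.
  move: eig_mu; rewrite mu_k (inj_eq (fmorph_inj toC)) eigenvalue_map.
  by rewrite -(rmorph0 toC) ltcR; apply: neg_other.
have uBc : map_mx toC u *m Bc = toC lam *: map_mx toC u.
  by rewrite -map_mxM uB map_mxZ.
have uxC0 : (map_mx toC u *m map_mx toC x) 0 0 = 0.
  by rewrite -map_mxM mxE ux0 rmorph0.
have uC0 : map_mx toC u != 0 by rewrite map_mx_eq0.
have xC0 : map_mx toC x != 0 by rewrite map_mx_eq0.
have := normalmx_form_lt0 (hermitian_normalmx hermBc)
  simple_Bc neg_Bc uC0 uBc uxC0 xC0.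
by rewrite form_toC -[X in toC _ < X](rmorph0 toC) ltcR.
Qed.

End RealSymmetric.

Lemma amgm_sqr (R : realFieldType) (X Y Z : R) :
  0 <= X -> 0 <= Y -> X + Y <= 2 * Z ->
  X * Y <= Z ^+ 2 /\ (X * Y = Z ^+ 2 -> X + Y = 2 * Z).
Proof.
move=> X_ge0 Y_ge0 XYZ; have := sqr_ge0 (X - Y); split=> [|XY_Z]; last by nra.
have : 0 <= (2 * Z - (X + Y)) * (2 * Z + (X + Y)) by rewrite mulr_ge0 //; lra.
nra.
Qed.

Section BilinearForm.
Variables (R : realType) (n : nat) (B : 'M[R]_n).
Hypothesis symB : B^T = B.

Lemma bform_ge0 (x : 'cV_n) :
  (forall i j, 0 <= B i j) -> (forall i, 0 <= x i 0) -> 0 <= bform B x x.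
Proof.
move=> B_ge0 x_ge0; rewrite /bform mxE; apply: sumr_ge0 => j _; rewrite mxE.
by apply: mulr_ge0 => //; apply: sumr_ge0 => i _; rewrite !mxE mulr_ge0.
Qed.

Lemma bformC (x y : 'cV_n) : bform B x y = bform B y x.
Proof.
rewrite /bform -[in LHS](trmxK (x^T *m B *m y)) mxE.
by rewrite !trmx_mul trmxK symB mulmxA.
Qed.

Lemma bformB (x y : 'cV_n) a b :
  bform B (a *: x - b *: y) (a *: x - b *: y) =
  a ^+ 2 * bform B x x - 2 * (a * b) * bform B x y + b ^+ 2 * bform B y y.
Proof.
have := bformC x y; rewrite /bform => xy_yx.
have subE (M N : 'M[R]_1) : (M - N) 0 0 = M 0 0 - N 0 0 by rewrite !mxE.
have scaleE c (M : 'M[R]_1) : (c *: M) 0 0 = c * M 0 0 by rewrite mxE.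
rewrite [_^T]raddfB /= ![(_ *: _)^T]linearZ /= !mulmxBl !mulmxBr.
by rewrite -!scalemxAl -!scalemxAr !(subE, scaleE) xy_yx; ring.
Qed.

Lemma bform_mul_le_sqr (x y : 'cV_n) a b :
  a * b != 0 -> 0 <= bform B x x -> 0 <= bform B y y ->
  bform B (b *: x - a *: y) (b *: x - a *: y) <= 0 ->
  bform B x x * bform B y y <= bform B x y ^+ 2 /\
  (bform B x x * bform B y y = bform B x y ^+ 2 ->
   bform B (b *: x - a *: y) (b *: x - a *: y) = 0).
Proof.
rewrite bformB => ab_neq0 xx_ge0 yy_ge0 w_le0.
set X := b ^+ 2 * bform B x x; set Y := a ^+ 2 * bform B y y.
set Z := a * b * bform B x y.
have X_ge0 : 0 <= X by rewrite mulr_ge0 ?sqr_ge0.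
have Y_ge0 : 0 <= Y by rewrite mulr_ge0 ?sqr_ge0.
have XYZ : X + Y <= 2 * Z by move: w_le0; rewrite /X /Y /Z; lra.
have [XY_le XY_eq] := amgm_sqr X_ge0 Y_ge0 XYZ.
have ab_gt0 : 0 < (a * b) ^+ 2 by rewrite exprn_even_gt0.
have XY_E : X * Y = (a * b) ^+ 2 * (bform B x x * bform B y y) by rewrite /X /Y; ring.
have Z_E : Z ^+ 2 = (a * b) ^+ 2 * bform B x y ^+ 2 by rewrite /Z; ring.
split=> [|e]; first by rewrite -(ler_pM2l ab_gt0) -XY_E -Z_E.
have := XY_eq; rewrite XY_E Z_E e /X /Y /Z => /(_ erefl); lra.
Qed.

End BilinearForm.

Lemma prob_vec_sum (R : realType) n (z : 'cV[R]_n) : prob_vec z -> \sum_i z i 0 = 1.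
Proof. by case=> z_ge0 <-; apply: eq_bigr => i _; rewrite ger0_norm. Qed.

Lemma prob_vec_neq0 (R : realType) n (z : 'cV[R]_n) : prob_vec z -> z != 0.
Proof.
move=> /prob_vec_sum; apply: contra_eqN => /eqP ->.
by rewrite big1 => [|i _]; rewrite ?mxE // eq_sym oner_eq0.
Qed.

Lemma prob_vec_scale_inj (R : realType) n (z1 z2 : 'cV[R]_n) c1 c2 :
  prob_vec z1 -> prob_vec z2 -> c1 != 0 -> c1 *: z1 = c2 *: z2 -> z1 = z2.
Proof.
move=> pz1 pz2 c1_neq0 e.
have : \sum_i (c1 *: z1) i 0 = \sum_i (c2 *: z2) i 0 by rewrite e.
under eq_bigr do rewrite mxE; under [RHS]eq_bigr do rewrite mxE.
rewrite -!mulr_sumr !prob_vec_sum // !mulr1 => c12.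
by apply: (scalerI c1_neq0); rewrite e c12.
Qed.

Theorem lemma17 (R : realType) (q : nat) (B : 'M[R]_q) (z1 z2 : 'cV[R]_q) :
  antiferromagnetic B -> prob_vec z1 -> prob_vec z2 ->
  bform B z1 z1 * bform B z2 z2 <= bform B z1 z2 ^+ 2 /\
  (bform B z1 z1 * bform B z2 z2 = bform B z1 z2 ^+ 2 <-> z1 = z2).
Proof.
move=> [symB B_ge0 _ [lam [_ eig_lam] [simple_lam neg_other]]] pz1 pz2.
have [u uB u0] := eigenvalueP eig_lam.
have neg_def x : (u *m x) 0 0 = 0 -> x != 0 -> bform B x x < 0.
  exact: symmetric_bform_lt0 symB (eq_leq simple_lam) neg_other u0 uB.
have form_ge0 z : prob_vec z -> 0 <= bform B z z by case=> z_ge0 _; apply: bform_ge0.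
have coord_neq0 z : prob_vec z -> (u *m z) 0 0 != 0.
  move=> pz; apply/eqP => uz0.
  by have := neg_def z uz0 (prob_vec_neq0 pz); rewrite ltNge form_ge0.
set a1 := (u *m z1) 0 0; set a2 := (u *m z2) 0 0; set w := a2 *: z1 - a1 *: z2.
have uw0 : (u *m w) 0 0 = 0.
  rewrite -trace_mx11 mulmxBr -!scalemxAr linearB !linearZ /= !trace_mx11.
  by rewrite -/a1 -/a2 mulrC subrr.
have w_le0 : bform B w w <= 0.
  have [->|w_neq0] := eqVneq w 0; last exact/ltW/neg_def.
  by rewrite /bform trmx0 !mul0mx mxE.
have a12_neq0 : a1 * a2 != 0 by rewrite mulf_neq0 ?coord_neq0.
have [ineq eq_case] :=
  bform_mul_le_sqr symB a12_neq0 (form_ge0 _ pz1) (form_ge0 _ pz2) w_le0.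
split=> //; split=> [/eq_case|<-]; last by rewrite expr2.
have [w0 _|w_neq0] := eqVneq w 0; last by move/eqP; rewrite lt_eqF ?neg_def.
apply: (prob_vec_scale_inj pz1 pz2 (coord_neq0 _ pz2) (c2 := a1)).
by apply/eqP; rewrite -subr_eq0 -/w w0.
Qed.
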